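(* Let $G$ be a discrete group, $\mathfrak g$ a finite string of elements of $G$, $\mathcal E$ a finite partition of $G$, and $\ell=|Con(\mathfrak g,\mathcal E)|$. Suppose $(B-A)X=0$ is a normal subsystem of $Eq(\mathfrak g,\mathcal E)$ consisting of $p$ equations (so $A,B$ are $p\times\ell$ $(0,1)$-matrices with rows $A_t,B_t$), and suppose that $\sum_{t=1}^p(B_t-A_t)=(1,1,\dots,1)$, i.e. $\alpha_C=1$ for every configuration $C$, where $(\alpha_C)_{C}=\sum_t(B_t-A_t)$. Then the Tarski number satisfies $\tau(G)\le(\ell-1)(2^p-1)$.
   Context: Configurations: for $\mathfrak g=(g_1,\dots,g_n)$ and a partition $\mathcal E=\{E_1,\dots,E_m\}$ of $G$, a configuration is $C=(c_0,\dots,c_n)\in\{1,\dots,m\}^{n+1}$ such that some $x\in G$ has $x\in E_{c_0}$ and $g_ix\in E_{c_i}$ ($1\le i\le n$); $Con(\mathfrak g,\mathcal E)$ is the set of configurations. The configuration equations $Eq(\mathfrak g,\mathcal E)$: variables $f_C$, equations $\sum_{C:\,c_j=i}f_C=\sum_{C:\,c_k=i}f_C$ for $1\le i\le m$, $0\le j,k\le n$, each written $aX=bX$ with $a,b\in\{0,1\}^\ell$ indicator vectors. A subsystem is a finite list (repetitions allowed, sides may be interchanged) of these equations $A_tX=B_tX$, written $(B-A)X=0$. Normality: with $\sum_t(B_t-A_t)$ strictly positive, $T$ the $p\times p$ lower triangular all-ones matrix, and for a permutation matrix $P$ with rows $P_1,\dots,P_p$, $P^+$ the matrix with rows $P_2,\dots,P_p,P_1$,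 the system is normal if for some permutation matrix $P$ all entries of $TP(B-A)-P^+A$ are integers $\ge-1$. Tarski number: a complete paradoxical decomposition of $G$ is a partition $\{A_1,\dots,A_r,B_1,\dots,B_s\}$ of $G$ together with $a_i,b_j\in G$ such that $\{a_iA_i\}_{i=1}^r$ and $\{b_jB_j\}_{j=1}^s$ are each partitions of $G$; $\tau(G)$ is the minimum of $r+s$ over all such decompositions ($\infty$ if none exists). *)

From HB Require Import structures.
From mathcomp Require Import all_boot all_order all_algebra all_fingroup.
Set Implicit Arguments. Unset Strict Implicit. Unset Printing Implicit Defensive.
Import GRing.Theory Num.Theory.

Record dgroup := DGroup {
  gcar :> Type;
  gmul : gcar -> gcar -> gcar;
  gone : gcar;
  ginv : gcar -> gcar;
  gmulA : forall x y z, gmul x (gmul y z) = gmul (gmul x y) z;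
  gmul1 : forall x, gmul gone x = x;
  gmulV : forall x, gmul (ginv x) x = gone }.

(* A candidate configuration (c_0,...,c_n) with values in {1..m}, encoded
   with 0-based indices: c_0 is C ord0, c_i is C (lift ord0 (i-1)). *)
Definition config (n m : nat) := {ffun 'I_n.+1 -> 'I_m}.

(* g = (g_1..g_n) encoded as g : 'I_n -> G (g (i-1) = g_i);
   the partition E_1..E_m encoded by E : G -> 'I_m (x \in E_{E x}). *)
Definition is_config (G : dgroup) (n m : nat) (g : 'I_n -> G) (E : G -> 'I_m)
    (C : config n m) : Prop :=
  exists x : G, C ord0 = E x /\
    forall i : 'I_n, C (lift ord0 i) = E (gmul (g i) x).

(* cs is a duplicate-free enumeration of exactly the configurations;
   its order fixes the order of the variables f_C (columns). *)
Definition enumerates (T : eqType) (P : T -> Prop) (cs : seq T) : Prop :=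
  uniq cs /\ forall C, C \in cs <-> P C.

(* Subsystem of p equations, equation t given by e t = (i, j, k), meaning
   sum_{C : c_j = i} f_C = sum_{C : c_k = i} f_C ; A_t is the left side. *)
Definition lhs_mx (n m p : nat) (cs : seq (config n m))
    (e : 'I_p -> 'I_m * 'I_n.+1 * 'I_n.+1) : 'M[int]_(p, size cs) :=
  \matrix_(t < p, c < size cs)
     (Posz ((tnth (in_tuple cs) c) (e t).1.2 == (e t).1.1 : nat))%R.

Definition rhs_mx (n m p : nat) (cs : seq (config n m))
    (e : 'I_p -> 'I_m * 'I_n.+1 * 'I_n.+1) : 'M[int]_(p, size cs) :=
  \matrix_(t < p, c < size cs)
     (Posz ((tnth (in_tuple cs) c) (e t).2 == (e t).1.1 : nat))%R.

Definition lowtri (p : nat) : 'M[int]_p := \matrix_(i < p, j < p) Posz ((j <= i)%N : nat).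

Definition perm_plus (p : nat) (s : 'S_p) : 'M[int]_p :=
  \matrix_(t < p, c < p) (perm_mx s : 'M[int]_p) (ordS t) c.

Definition normal_system (p l : nat) (A B : 'M[int]_(p, l)) : Prop :=
  (forall c : 'I_l, (0 < \sum_(t < p) (B t c - A t c))%R) /\
  exists s : 'S_p, forall (t : 'I_p) (c : 'I_l),
    (-1 <= (lowtri p *m perm_mx s *m (B - A) - perm_plus s *m A) t c)%R.

(* There is a complete paradoxical decomposition with r + s <= N,
   i.e. tau(G) <= N.  lab x = inl i means x \in A_i, inr j means x \in B_j. *)
Definition tarski_le (G : dgroup) (N : nat) : Prop :=
  exists (r s : nat) (lab : G -> 'I_r + 'I_s) (a : 'I_r -> G) (b : 'I_s -> G),
    (forall y : G, exists! i : 'I_r, exists x, lab x = inl i /\ gmul (a i) x = y) /\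
    (forall y : G, exists! j : 'I_s, exists x, lab x = inr j /\ gmul (b j) x = y) /\
    (r + s <= N)%N.

From HB Require Import structures.
From mathcomp Require Import all_boot all_order all_algebra all_fingroup.
From mathcomp Require Import zify.
From Stdlib Require Import ClassicalEpsilon.
Import GRing.Theory Num.Theory.
Set Implicit Arguments. Unset Strict Implicit. Unset Printing Implicit Defensive.

(* Put one token on every x of G and process the equations in the order s
   given by normality.  Equation k says that w_k = g_k^-1 g_j maps
   A_k = {x | g_j x in E_i} onto B_k = {x | g_k x in E_i}; processing it moves
   the top token of every point y of A_k to the top of the stack at w_k y.
   Normality says exactly that y still holds a token when this happens, and
   alpha = 1 says that in the end every point holds exactly two tokens.  A
   token that was moved at the steps j_1 < ... < j_r has been translated by
   w_(j_r) ... w_(j_1), one of 2^p words, and the tokens in the first and in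
   the second slot give the two halves of a complete paradoxical
   decomposition.  The token in the second slot was not moved at the last
   step, so 2^p + 2^(p-1) pieces suffice; this is at most (l-1)(2^p-1)
   because l >= 3 and p >= 2: each row of B - A sums to 0 or to at most l - 2,
   while all rows together sum to l. *)

Section GroupFacts.
Variable G : dgroup.
Implicit Types x y z : G.

Lemma gmulVr x : gmul x (ginv x) = gone G.
Proof.
have -> : gmul x (ginv x) = gmul (gmul (ginv (ginv x)) (ginv x)) (gmul x (ginv x)).
  by rewrite gmulV gmul1.
by rewrite -gmulA (gmulA (ginv x) x) gmulV gmul1 gmulV.
Qed.

Lemma gmulK x y : gmul (ginv x) (gmul x y) = y.
Proof. by rewrite gmulA gmulV gmul1. Qed.

Lemma gmulKV x y : gmul x (gmul (ginv x) y) = y.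
Proof. by rewrite gmulA gmulVr gmul1. Qed.

Lemma gmulI x : injective (gmul x).
Proof. by move=> y z eq_xy_xz; rewrite -(gmulK x y) eq_xy_xz gmulK. Qed.

Lemma gmul_surj x y : exists z, gmul x z = y.
Proof. by exists (gmul (ginv x) y); rewrite gmulKV. Qed.

Lemma gmul_eqVl x y z : (y = gmul x z) <-> (gmul (ginv x) y = z).
Proof. by split=> [->|<-]; rewrite ?gmulK ?gmulKV. Qed.

End GroupFacts.

Lemma tarski_le_mono (G : dgroup) (N M : nat) :
  N <= M -> tarski_le G N -> tarski_le G M.
Proof.
move=> leNM [r [s [lab [a [b [A_part [B_part le_rs]]]]]]].
by exists r, s, lab, a, b; do 2!split=> //; apply: leq_trans le_rs leNM.
Qed.

Lemma tarski_le_two_to_one (G : dgroup) (T : finType) (V : {set T})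
    (a : T -> G) (u v : G -> T) :
  (forall y, v y \in V) ->
  (forall x, exists! yc : G * bool,
     yc.1 = gmul (a (if yc.2 then v yc.1 else u yc.1)) x) ->
  tarski_le G (#|T| + #|V|).
Proof.
move=> vV cover.
pose home x := sval (constructive_indefinite_description _ (cover x)).
have homeP x : let: (y, c) := home x in y = gmul (a (if c then v y else u y)) x.
  by have := svalP (constructive_indefinite_description _ (cover x));
    rewrite -/(home x); case: (home x) => y c [].
have homeE x y c : y = gmul (a (if c then v y else u y)) x -> home x = (y, c).
  have [_ uniq_home] := svalP (constructive_indefinite_description _ (cover x)).
  by move=> Py; exact: (uniq_home (y, c)).
pose lab x := let: (y, c) := home x in
  if c then inr (enum_rank_in (vV (gone G)) (v y)) else inl (enum_rank (u y)).
exists #|T|, #|V|, lab, (fun i => a (enum_val i)), (fun j => a (enum_val j)).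
split; [|split=> //] => y.
- exists (enum_rank (u y)); split.
    exists (gmul (ginv (a (u y))) y).
    by rewrite /lab (homeE _ y false) ?gmulKV // enum_rankK gmulKV.
  move=> i [x []]; rewrite /lab; have := homeP x.
  by case: (home x) => y' [] // Py' [<-]; rewrite enum_rankK -Py' => ->.
- exists (enum_rank_in (vV (gone G)) (v y)); split.
    exists (gmul (ginv (a (v y))) y).
    by rewrite /lab (homeE _ y true) ?gmulKV // enum_rankK_in ?gmulKV.
  move=> j [x []]; rewrite /lab; have := homeP x.
  by case: (home x) => y' [] // Py' [<-]; rewrite enum_rankK_in // -Py' => ->.
Qed.

Lemma card_sets_notin (T : finType) (t : T) :
  #|[set S : {set T} | t \notin S]| = 2 ^ #|T|.-1.
Proof.
have -> : [set S : {set T} | t \notin S] = powerset [set~ t].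
  by apply/setP => S; rewrite powersetE inE subsetC sub1set inE.
by rewrite card_powerset cardsC1.
Qed.

Section TokenRedistribution.

Variables (G : dgroup) (p : nat) (A B : nat -> G -> bool) (w : nat -> G).
Hypothesis B_shift : forall k x, B k (gmul (w k) x) = A k x.

Lemma B_shiftV k y : B k y = A k (gmul (ginv (w k)) y).
Proof. by rewrite -B_shift gmulKV. Qed.

Definition mass k y : int := (1 + \sum_(j < k) ((B j y)%:Z - (A j y)%:Z))%R.

Lemma massS k y : mass k.+1 y = (mass k y + (B k y)%:Z - (A k y)%:Z)%R.
Proof. by rewrite /mass big_ord_recr /= !addrA. Qed.

Hypothesis mass_pos : forall k y, k <= p -> A k y -> (0 < mass k y)%R.

Fixpoint word k (S : {set 'I_p.+1}) : G :=
  if k is k'.+1 then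
    if inord k' \in S then gmul (w k') (word k' S) else word k' S
  else gone G.

(* The stack at y after k steps lists, from the top, the tokens sitting at y;
   a token is recorded as the set S of steps at which it was moved, so that it
   started at (word k S)^-1 y.  When the stack at the source is empty, head
   returns the junk value set0; mass_pos rules this case out. *)
Fixpoint stack k : G -> seq {set 'I_p.+1} :=
  if k is k'.+1 then fun y =>
    nseq (B k' y) (inord k' |: head set0 (stack k' (gmul (ginv (w k')) y)))
    ++ drop (A k' y) (stack k' y)
  else fun=> [:: set0].

Lemma size_stackS k y : size (stack k.+1 y) = B k y + (size (stack k y) - A k y).
Proof. by rewrite /= size_cat size_nseq size_drop. Qed.

Lemma nth_stackS k y i :
  nth set0 (stack k.+1 y) (B k y + i) = nth set0 (stack k y) (A k y + i).
Proof. by rewrite /= nth_cat size_nseq ltnNge leq_addr /= addKn nth_drop. Qed.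

Lemma nth_stackS0 k y : B k y ->
  nth set0 (stack k.+1 y) 0 = inord k |: head set0 (stack k (gmul (ginv (w k)) y)).
Proof. by move=> /= ->. Qed.

Lemma size_stack k y : k <= p.+1 -> Posz (size (stack k y)) = mass k y.
Proof.
elim: k y => [|k IH] y lekp; first by rewrite /mass big_ord0 addr0.
have := @mass_pos k y (ltnSE lekp); rewrite size_stackS massS -(IH y (ltnW lekp)).
by case: (A k y); case: (B k y) => /=; lia.
Qed.

Lemma stack_lt k y S (j : 'I_p.+1) :
  k <= p.+1 -> S \in stack k y -> j \in S -> j < k.
Proof.
elim: k y S => [|k IH] y S lekp /=; first by rewrite inE => /eqP ->; rewrite inE.
have IHk z S' : S' \in stack k z -> j \in S' -> j < k.+1.
  by move=> S'_k /(IH _ _ (ltnW lekp) S'_k)/ltnW.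
rewrite mem_cat => /orP[/nseqP[-> _] | /mem_drop]; last exact: IHk.
rewrite in_setU1 => /orP[/eqP-> | ]; first by rewrite inordK.
case: stack (IHk (gmul (ginv (w k)) y)) => [|S0 s] /= IHz; first by rewrite inE.
by move=> /IHz; apply; rewrite mem_head.
Qed.

Lemma word_ext k (S S' : {set 'I_p.+1}) :
  (forall j, j < k -> (inord j \in S) = (inord j \in S')) -> word k S = word k S'.
Proof.
elim: k => [|k IH] eqSS' //=.
by rewrite eqSS' // IH // => j ltjk; apply/eqSS'/ltnW.
Qed.

Lemma word_push k S : k <= p -> word k.+1 (inord k |: S) = gmul (w k) (word k S).
Proof.
move=> lekp /=; rewrite setU11; congr gmul; apply: word_ext => j ltjk.
have ne_jk : inord j != inord k :> 'I_p.+1.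
  by rewrite -val_eqE /= !inordK ?neq_ltn ?ltjk //; apply: ltn_trans ltjk _.
by rewrite in_setU1 (negbTE ne_jk).
Qed.

Lemma word_stackS k y S : k <= p -> S \in stack k y -> word k.+1 S = word k S.
Proof.
move=> lekp S_k /=; case: ifP => // /(stack_lt (leqW lekp) S_k).
by rewrite inordK ?ltnn.
Qed.

Definition token_at k x (yi : G * nat) : Prop :=
  let: (y, i) := yi in
  i < size (stack k y) /\ y = gmul (word k (nth set0 (stack k y) i)) x.

Definition prev k (yi : G * nat) : G * nat :=
  let: (y, i) := yi in
  if B k y && (i == 0) then (gmul (ginv (w k)) y, 0) else (y, i - B k y + A k y).

Definition next k (yi : G * nat) : G * nat :=
  let: (y, i) := yi in
  if A k y && (i == 0) then (gmul (w k) y, 0) else (y, i - A k y + B k y).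

Lemma nextK k : cancel (next k) (prev k).
Proof.
case=> y i /=; case: ifP => [/andP[Ay /eqP->] | not_pop] /=.
  by rewrite B_shift Ay gmulK.
by move: not_pop; case: (A k y); case: (B k y) => /= not_pop;
  rewrite ?addn1 /=; congr pair; lia.
Qed.

Lemma prev_inj k : injective (prev k).
Proof.
case=> y1 i1 [y2 i2] /=.
case: ifP => [/andP[B1 /eqP->] | nB1]; case: ifP => [/andP[B2 /eqP->] | nB2].
- by case=> /gmulI ->.
- by case=> eq_y; have := B1; rewrite B_shiftV eq_y => ->; lia.
- by case=> eq_y; have := B2; rewrite B_shiftV -eq_y => ->; lia.
- case=> eq_y eq_i; subst y2; congr pair.
  by move: nB1 nB2 eq_i; case: (B k y1) => /=; lia.
Qed.

Lemma token_atS k x yi : k <= p -> token_at k.+1 x yi <-> token_at k x (prev k yi).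
Proof.
case: yi => y i lekp; rewrite /token_at /prev; case: ifP => [/andP[By /eqP->] | not_push];
  cbv beta iota.
  set z := gmul (ginv (w k)) y.
  have z_pos : 0 < size (stack k z).
    have := @mass_pos k z lekp; rewrite -B_shiftV By -size_stack ?leqW //.
    by move=> /(_ isT).
  rewrite nth_stackS0 // word_push // size_stackS By -gmulA gmul_eqVl -nth0 -/z.
  by rewrite add1n z_pos; split=> -[_ eq_z].
have [j ->] : exists j, i = B k y + j.
  by exists (i - B k y); rewrite subnKC //; move: not_push; case: (B k y); lia.
rewrite addKn [j + _]addnC size_stackS nth_stackS ltn_add2l ltn_subRL.
by split=> -[lt_j]; rewrite (word_stackS lekp (mem_nth set0 lt_j)).
Qed.

Lemma token_at_unique k x : k <= p.+1 -> exists! yi, token_at k x yi.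
Proof.
elim: k => [_ | k IH lekp].
  exists (x, 0); split=> [|[y [|i]] []] //=; first by rewrite gmul1.
  by rewrite gmul1 => _ ->.
have [yi [yi_at yi_uniq]] := IH (ltnW lekp).
exists (next k yi); split=> [|yi' /(token_atS _ _ lekp) yi'_at].
  by apply/(token_atS _ _ lekp); rewrite nextK.
by apply: (@prev_inj k); rewrite nextK; apply: yi_uniq.
Qed.

Lemma ord_max_notin_slot1 y : ord_max \notin nth set0 (stack p.+1 y) 1.
Proof.
rewrite -[1](subnKC (leq_b1 (B p y))) nth_stackS.
case: (ltnP (A p y + (1 - B p y)) (size (stack p y))) => [lt_i | ge_i].
  by apply/negP => /(stack_lt (leqnSn p) (mem_nth set0 lt_i)); rewrite ltnn.
by rewrite nth_default // inE.
Qed.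

Hypothesis mass_end : forall y, mass p.+1 y = 2%R.

Lemma tarski_le_redistribution : tarski_le G (2 ^ p.+1 + 2 ^ p).
Proof.
have size2 y : size (stack p.+1 y) = 2.
  by have := @size_stack p.+1 y (leqnn _); rewrite mass_end => -[].
pose V := [set S : {set 'I_p.+1} | ord_max \notin S].
have -> : 2 ^ p.+1 + 2 ^ p = #|{set 'I_p.+1}| + #|V|.
  by rewrite card_sets_notin -(cardsT {set _}) -powersetT card_powerset !cardsT card_ord.
apply: (@tarski_le_two_to_one G _ V (word p.+1)
  (fun y => nth set0 (stack p.+1 y) 0) (fun y => nth set0 (stack p.+1 y) 1)).
  by move=> y; rewrite inE ord_max_notin_slot1.
move=> x; have [[y i] [[lt_i eq_y] uniq_yi]] := token_at_unique x (leqnn p.+1).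
rewrite size2 in lt_i.
exists (y, i == 1); split=> [|[y' c] eq_y'].
  by move: lt_i eq_y; case: i {uniq_yi} => [|[|]].
have [-> ->] : (y, i) = (y', c : nat).
  by apply: uniq_yi; split; rewrite ?size2; case: c eq_y'.
by case: c {eq_y'}.
Qed.

End TokenRedistribution.

Lemma lowtri_perm_mxE (p l : nat) (s : 'S_p) (M : 'M[int]_(p, l)) i c :
  ((lowtri p *m perm_mx s *m M) i c = \sum_(j < p | (j <= i)%N) M (s j) c)%R.
Proof.
rewrite -mulmxA -row_permE mxE [RHS]big_mkcond; apply: eq_bigr => j _.
by rewrite !mxE; case: (j <= i)%N; rewrite ?mul1r ?mul0r.
Qed.

Lemma perm_plus_mxE (p l : nat) (s : 'S_p) (M : 'M[int]_(p, l)) i c :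
  ((perm_plus s *m M) i c = M (s (ordS i)) c)%R.
Proof.
have -> : M (s (ordS i)) c = row_perm s M (ordS i) c by rewrite mxE.
by rewrite row_permE !mxE; apply: eq_bigr => j _; rewrite mxE.
Qed.

Lemma normal_entryE (p l : nat) (s : 'S_p) (D M : 'M[int]_(p, l)) i c :
  ((lowtri p *m perm_mx s *m D - perm_plus s *m M) i c
   = \sum_(j < p | (j <= i)%N) D (s j) c - M (s (ordS i)) c)%R.
Proof.
have subE (X Y : 'M[int]_(p, l)) : ((X - Y) i c = X i c - Y i c)%R by rewrite !mxE.
by rewrite subE lowtri_perm_mxE perm_plus_mxE.
Qed.

Lemma sum_indicator_diff (l : nat) (a b : pred 'I_l) :
  (exists c, a c) -> (exists c, ~~ b c) ->
  (\sum_(c < l) ((b c)%:Z - (a c)%:Z) <= l%:Z - 2)%R.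
Proof.
move=> [c1 a_c1] [c0 nb_c0].
have sum_ind (f : pred 'I_l) : (\sum_c (f c)%:Z = #|f|%:Z)%R.
  rewrite -sum1_card -natz natr_sum [RHS]big_mkcond /=.
  by apply: eq_bigr => c _; rewrite unfold_in; case: (f c).
have := cardC b; have : 0 < #|[predC b]| by apply/card_gt0P; exists c0.
have : 0 < #|a| by apply/card_gt0P; exists c1.
rewrite sumrB !sum_ind card_ord; move: #|a| #|b| #|[predC b]| => na nb nc; lia.
Qed.

Section ConfigurationEquations.
Local Open Scope ring_scope.

Variables (G : dgroup) (n m : nat) (g : 'I_n -> G) (E : G -> 'I_m).
Hypothesis E_surj : forall i, exists x, E x = i.
Variable cs : seq (config n m).
Hypothesis cs_enum : enumerates (is_config g E) cs.

Definition gext (j : 'I_n.+1) : G :=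
  if unlift ord0 j is Some i then g i else gone G.

Definition config_of x : config n m := [ffun j => E (gmul (gext j) x)].

Lemma config_ofP x : is_config g E (config_of x).
Proof.
exists x; split=> [|i]; rewrite ffunE /gext ?unlift_none ?gmul1 //.
by rewrite liftK.
Qed.

Lemma is_configP C : is_config g E C -> exists x, C = config_of x.
Proof.
move=> [x [C0 Ci]]; exists x; apply/ffunP => j; rewrite ffunE /gext.
by case: unliftP => [i ->|->]; rewrite ?Ci // gmul1.
Qed.

Lemma index_config_of x : (index (config_of x) cs < size cs)%N.
Proof. by rewrite index_mem; apply/cs_enum.2/config_ofP. Qed.

Definition col x : 'I_(size cs) := Ordinal (index_config_of x).

Lemma tnth_col x : tnth (in_tuple cs) (col x) = config_of x.
Proof. by rewrite (tnth_nth (config_of x)) nth_index // -index_mem index_config_of. Qed.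

Lemma col_surj c : exists x, c = col x.
Proof.
have [x eq_c] := is_configP ((cs_enum.2 _).1 (mem_tnth c (in_tuple cs))).
exists x; apply: val_inj; rewrite /= -eq_c (tnth_nth (config_of x)).
by rewrite index_uniq ?cs_enum.1.
Qed.

Variables (p : nat) (e : 'I_p.+1 -> 'I_m * 'I_n.+1 * 'I_n.+1).

Definition in_lhs t x := E (gmul (gext (e t).1.2) x) == (e t).1.1.
Definition in_rhs t x := E (gmul (gext (e t).2) x) == (e t).1.1.

Lemma lhs_mx_col t x : lhs_mx cs e t (col x) = (in_lhs t x)%:Z.
Proof. by rewrite mxE tnth_col ffunE. Qed.

Lemma rhs_mx_col t x : rhs_mx cs e t (col x) = (in_rhs t x)%:Z.
Proof. by rewrite mxE tnth_col ffunE. Qed.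

Definition row_sum t := \sum_(c < size cs) (rhs_mx cs e t c - lhs_mx cs e t c).

Lemma row_sum_small t : row_sum t = 0 \/ row_sum t <= (size cs)%:Z - 2.
Proof.
pose a c := tnth (in_tuple cs) c (e t).1.2 == (e t).1.1.
pose b c := tnth (in_tuple cs) c (e t).2 == (e t).1.1.
have a_col x : a (col x) = in_lhs t x by rewrite /a tnth_col ffunE.
have b_col x : b (col x) = in_rhs t x by rewrite /b tnth_col ffunE.
rewrite /row_sum (eq_bigr (fun c => (b c)%:Z - (a c)%:Z)) => [|c _]; last by rewrite !mxE.
case: (boolP [forall c, b c]) => [/forallP all_b | /forallPn[c0 not_b]].
  left; apply: big1 => c _; have [x ->] := col_surj c.
  have E_const z : E z = (e t).1.1.
    have [x' <-] := gmul_surj (gext (e t).2) z.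
    by apply/eqP; rewrite -/(in_rhs t x') -b_col.
  by rewrite a_col b_col /in_lhs /in_rhs !E_const eqxx subrr.
right; apply: sum_indicator_diff; last by exists c0.
have [y Ey] := E_surj (e t).1.1.
have [x eq_y] := gmul_surj (gext (e t).1.2) y.
by exists (col x); rewrite a_col /in_lhs eq_y Ey.
Qed.

Hypothesis alpha_one :
  forall c, \sum_(t < p.+1) (rhs_mx cs e t c - lhs_mx cs e t c) = 1.

Lemma sum_row_sum : \sum_(t < p.+1) row_sum t = (size cs)%:Z.
Proof.
rewrite /row_sum exchange_big /= (eq_bigr (fun=> 1)) => [|c _]; last exact: alpha_one.
by rewrite sumr_const card_ord natz.
Qed.

Lemma size_cs_ge3 : (3 <= size cs)%N.
Proof.
have l_gt0 := leq_ltn_trans (leq0n _) (index_config_of (gone G)).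
rewrite leqNgt; apply/negP => l_small.
have : \sum_(t < p.+1) row_sum t <= \sum_(t < p.+1) 0.
  apply: ler_sum => t _; case: (row_sum_small t) => [-> //|]; lia.
rewrite big1_eq sum_row_sum; lia.
Qed.

Lemma equations_ge2 : (2 <= p.+1)%N.
Proof.
have : \sum_(t < p.+1) row_sum t <= \sum_(t < p.+1) ((size cs)%:Z - 2).
  apply: ler_sum => t _; have := size_cs_ge3; case: (row_sum_small t) => [->|]; lia.
rewrite sum_row_sum sumr_const card_ord; lia.
Qed.

Variable s : 'S_p.+1.
Hypothesis s_normal : forall t c,
  -1 <= (lowtri p.+1 *m perm_mx s *m (rhs_mx cs e - lhs_mx cs e)
         - perm_plus s *m lhs_mx cs e) t c.

Definition lhs_at k := in_lhs (s (inord k)).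
Definition rhs_at k := in_rhs (s (inord k)).
Definition shift_at k :=
  gmul (ginv (gext (e (s (inord k))).2)) (gext (e (s (inord k))).1.2).

Lemma rhs_at_shift k x : rhs_at k (gmul (shift_at k) x) = lhs_at k x.
Proof. by rewrite /rhs_at /in_rhs -gmulA gmulKV. Qed.

Lemma mass_at k y : (k <= p.+1)%N -> mass lhs_at rhs_at k y =
  1 + \sum_(j < p.+1 | (j < k)%N) (rhs_mx cs e - lhs_mx cs e) (s j) (col y).
Proof.
move=> lekp; rewrite /mass.
rewrite (big_ord_widen p.+1 (fun j => (rhs_at j y)%:Z - (lhs_at j y)%:Z) lekp).
congr (_ + _).
by apply: eq_bigr => j _; rewrite /rhs_at /lhs_at inord_val -rhs_mx_col -lhs_mx_col !mxE.
Qed.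

Lemma mass_at_pos k y : (k <= p)%N -> lhs_at k y -> 0 < mass lhs_at rhs_at k y.
Proof.
case: k => [|k] lekp lhs_y; first by rewrite /mass big_ord0.
have ordS_k : ordS (inord k) = inord k.+1 :> 'I_p.+1.
  by apply: val_inj; rewrite /= !inordK ?modn_small // ltnW.
(* Row k of the normality condition reads mass k.+1 y >= lhs_at k.+1 y. *)
have := s_normal (inord k) (col y).
rewrite normal_entryE ordS_k lhs_mx_col -/(lhs_at _ y) lhs_y mass_at; last exact: ltnW.
rewrite (eq_bigl (fun j : 'I_p.+1 => (j < k.+1)%N)) => [|j].
  by set S := \sum_(j < p.+1 | _) _; lia.
by rewrite inordK ?ltnS // ltnW.
Qed.

Lemma mass_at_end y : mass lhs_at rhs_at p.+1 y = 2.
Proof.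
rewrite mass_at // -[2]/(1 + 1) -(alpha_one (col y)); congr (_ + _).
rewrite [RHS](reindex_perm s); apply: eq_big => [j | j _]; first exact: ltn_ord.
by rewrite !mxE.
Qed.

Lemma tarski_le_equations : tarski_le G (2 ^ p.+1 + 2 ^ p).
Proof. exact: tarski_le_redistribution rhs_at_shift mass_at_pos mass_at_end. Qed.

End ConfigurationEquations.

Theorem corollary3p2 (G : dgroup) (n m : nat) (g : 'I_n -> G) (E : G -> 'I_m)
  (HE : forall i : 'I_m, exists x : G, E x = i)
  (cs : seq (config n m)) (Hcs : enumerates (is_config g E) cs)
  (p : nat) (e : 'I_p -> 'I_m * 'I_n.+1 * 'I_n.+1)
  (Hnormal : normal_system (lhs_mx cs e) (rhs_mx cs e))
  (Hsum : forall c : 'I_(size cs),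
      (\sum_(t < p) (rhs_mx cs e t c - lhs_mx cs e t c))%R = 1%R) :
  tarski_le G ((size cs - 1) * (2 ^ p - 1)).
Proof.
case: p e Hnormal Hsum => [|p] e [_ [s s_normal]] alpha_one.
  by have := alpha_one (Ordinal (index_config_of Hcs (gone G))); rewrite big_ord0.
have l_ge3 := size_cs_ge3 HE Hcs alpha_one.
have two_le_pow : 2 <= 2 ^ p.
  by rewrite -{1}(expn1 2) leq_pexp2l // -ltnS (equations_ge2 HE Hcs alpha_one).
apply: tarski_le_mono (tarski_le_equations Hcs alpha_one s_normal).
by rewrite expnS; move: two_le_pow l_ge3; set X := 2 ^ p; set L := size cs; nia.
Qed.
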